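(* In the CTMDP of Example 1 with $\lambda_1+\lambda_2<\min(\mu_1,\mu_2)$, the priority-service stationary policy $d$, defined by $d(\mathbf q)=2$ if $q_2\ge1$, $d(\mathbf q)=1$ if $q_2=0,q_1\ge1$, $d(\mathbf 0)=0$, is a $\mathbf 0$-standard policy: for every $\mathbf q\in S$, the expected time $m_{\mathbf q,\mathbf 0}(d)$ and the expected accumulated cost $c_{\mathbf q,\mathbf 0}(d)$ of a first passage from $\mathbf q$ to $\mathbf 0$ are finite.
   Context: Example 1: parameters $\lambda_1,\lambda_2,\mu_1,\mu_2,\lambda_T>0$, $h_1,h_2,c\ge0$; state space $\{(q_1,q_2):q_1,q_2\in\mathbb Z_{\ge0}\}$. Under action 1 ($q_1\ge1$): transitions to $(q_1-1,q_2)$ at rate $\mu_1$, $(q_1+1,q_2)$ at rate $\lambda_1$, $(q_1,q_2+1)$ at rate $\lambda_2$, $(q_1-1,q_2+1)$ at rate $q_1\lambda_T$. Under action 2 ($q_2\ge1$): transitions to $(q_1,q_2-1)$ at rate $\mu_2$, $(q_1+1,q_2)$ at rate $\lambda_1$, $(q_1,q_2+1)$ at rate $\lambda_2$, $(q_1-1,q_2+1)$ at rate $q_1\lambda_T$. At $\mathbf 0$ (action 0) arrivals occur at rates $\lambda_1$ to $(1,0)$ and $\lambda_2$ to $(0,1)$. Cost rate $c(\mathbf q)=h_1q_1+h_2q_2+c\lambda_Tq_1$. First passage from $\mathbf q$ to $\mathbf 0$ ends at the first time $t>0$ the process is at $\mathbf 0$ after at least one transition has occurred; $c_{\mathbf q,\mathbf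 0}(d)$ is the expected integral of $c(x(s))$ over that passage. *)

From Stdlib Require Import Reals List.
Open Scope R_scope.

Definition state := (nat * nat)%type.

Record params := Params {
  lam1 : R; lam2 : R; mu1 : R; mu2 : R; lamT : R;
  h1 : R; h2 : R; cc : R }.

(* For action 1 or 2, the transition to (q1-1,q2+1) has rate q1*lamT
   (it has rate 0 when q1 = 0, so the truncated target is irrelevant). *)
Definition trans (p : params) (a : nat) (q : state) : list (state * R) :=
  let (q1, q2) := q in
  match a with
  | 0%nat => ((1%nat, 0%nat), lam1 p) :: ((0%nat, 1%nat), lam2 p) :: nil
  | 1%nat => ((pred q1, q2), mu1 p) :: ((S q1, q2), lam1 p)
             :: ((q1, S q2), lam2 p) :: ((pred q1, S q2), INR q1 * lamT p) :: nil
  | _ => ((q1, pred q2), mu2 p) :: ((S q1, q2), lam1 p)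
             :: ((q1, S q2), lam2 p) :: ((pred q1, S q2), INR q1 * lamT p) :: nil
  end.

Definition policy := state -> nat.

Definition prio : policy := fun q =>
  let (q1, q2) := q in
  match q2 with
  | S _ => 2%nat
  | 0%nat => match q1 with S _ => 1%nat | 0%nat => 0%nat end
  end.

Definition cost (p : params) (q : state) : R :=
  h1 p * INR (fst q) + h2 p * INR (snd q) + cc p * lamT p * INR (fst q).

Definition is_zero (q : state) : bool :=
  match q with (0%nat, 0%nat) => true | _ => false end.

Definition exit_rate (p : params) (d : policy) (q : state) : R :=
  fold_right (fun tr acc => snd tr + acc) 0 (trans p (d q) q).

Definition step_sum (p : params) (d : policy) (q : state) (f : state -> R) : R :=
  fold_right (fun tr acc => snd tr / exit_rate p d q * f (fst tr) + acc) 0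
    (trans p (d q) q).

(* Embedded jump chain.  G n y = probability, from y, of being at 0 for the
   first time (times >= 0) exactly after n further jumps. *)
Fixpoint taboo_hit (p : params) (d : policy) (n : nat) (y : state) : R :=
  match n with
  | 0%nat => if is_zero y then 1 else 0
  | S k => if is_zero y then 0 else step_sum p d y (taboo_hit p d k)
  end.

(* W n y = E[ sum of w(x_i) over visited states before hitting 0 ;
   hitting 0 (first time, times >= 0) exactly after n jumps ]. *)
Fixpoint taboo_weight (p : params) (d : policy) (w : state -> R) (n : nat) (y : state) : R :=
  match n with
  | 0%nat => 0
  | S k => if is_zero y then 0 else
      step_sum p d y (fun z => w y * taboo_hit p d k z + taboo_weight p d w k z)
  end.

(* First passage from q to 0 (at least one transition): probability that it
   happens exactly at jump n+1. *)
Definition passage_prob (p : params) (d : policy) (q : state) (n : nat) : R :=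
  step_sum p d q (taboo_hit p d n).

(* Expected accumulated w-weight over a first passage from q to 0 ending
   exactly at jump n+1, where the state x_i contributes w(x_i). *)
Definition passage_weight (p : params) (d : policy) (w : state -> R) (q : state) (n : nat) : R :=
  step_sum p d q (fun z => w q * taboo_hit p d n z + taboo_weight p d w n z).

(* Expected time m_{q,0}(d) is finite: passage happens a.s. and the
   expected sum of mean holding times 1/nu(x_i) is finite.  (Given the jump
   chain, holding time in x_i is Exp(nu(x_i)), so E[time] = E[sum 1/nu(x_i)];
   on non-passage the passage time is +infinity.) *)
Definition finite_mean_passage_time (p : params) (d : policy) (q : state) : Prop :=
  infinite_sum (passage_prob p d q) 1 /\
  exists l, infinite_sum (passage_weight p d (fun x => / exit_rate p d x) q) l.

(* Expected cost c_{q,0}(d) finite: E[ sum c(x_i)/nu(x_i) ] finite, passage a.s. *)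
Definition finite_mean_passage_cost (p : params) (d : policy) (q : state) : Prop :=
  infinite_sum (passage_prob p d q) 1 /\
  exists l, infinite_sum
    (passage_weight p d (fun x => cost p x / exit_rate p d x) q) l.

Definition zero_standard (p : params) (d : policy) : Prop :=
  forall q : state, finite_mean_passage_time p d q /\ finite_mean_passage_cost p d q.

(* Let L(q) = q1 + b q2 with lam1/(mu2 - lam2) < b < 1.  Under priority service L
   drifts down at rate at least gap > 0: serving queue 1 removes one unit, serving
   queue 2 removes b, and a transfer from queue 1 to queue 2 lowers L by 1 - b.
   Hence the quadratic V = K (L^2 + M L), for K and M large, satisfies the
   Foster-Lyapunov inequality  w(y) + E[V(next)] <= V(y)  away from 0, with
   w = 1 + (1 + c)/nu dominating one jump, the mean holding time 1/nu and the mean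
   cost c/nu of a sojourn.  For the embedded jump chain such an inequality bounds
   by V the expected w-weight accumulated before reaching 0.  With w = 1 it bounds
   the sum of the probabilities of not having reached 0 within N jumps; these are
   nonincreasing in N, so the N-th one is at most V/(N+1) and passage is certain. *)

From Stdlib Require Import Reals Lra Lia List.
Open Scope R_scope.

Section FirstPassage.

Variables (p : params) (d : policy).

Lemma step_sum_weighted y f : step_sum p d y f =
  fold_right (fun tr acc => snd tr * f (fst tr) + acc) 0 (trans p (d y) y) / exit_rate p d y.
Proof.
  unfold step_sum; generalize (exit_rate p d y); intros nu.
  induction (trans p (d y) y) as [|tr l IH]; simpl; [|rewrite IH]; unfold Rdiv; ring.
Qed.

Lemma step_sum_ext y f g : (forall z, f z = g z) -> step_sum p d y f = step_sum p d y g.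
Proof.
  intros Hfg; rewrite !step_sum_weighted.
  induction (trans p (d y) y) as [|tr l IH]; simpl; [|rewrite Hfg]; lra.
Qed.

Lemma step_sum_add y f g :
  step_sum p d y (fun z => f z + g z) = step_sum p d y f + step_sum p d y g.
Proof. rewrite !step_sum_weighted; induction (trans p (d y) y); simpl; lra. Qed.

Lemma step_sum_sub y f g :
  step_sum p d y (fun z => f z - g z) = step_sum p d y f - step_sum p d y g.
Proof. rewrite !step_sum_weighted; induction (trans p (d y) y); simpl; lra. Qed.

Lemma step_sum_scal y c f : step_sum p d y (fun z => c * f z) = c * step_sum p d y f.
Proof.
  rewrite !step_sum_weighted; unfold Rdiv; rewrite <- Rmult_assoc; f_equal.
  induction (trans p (d y) y) as [|tr l IH]; simpl; [|rewrite IH]; ring.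
Qed.

Lemma step_sum_sum y (F : nat -> state -> R) N :
  step_sum p d y (fun z => sum_f_R0 (fun n => F n z) N) =
  sum_f_R0 (fun n => step_sum p d y (F n)) N.
Proof. induction N as [|N IH]; simpl; [|rewrite step_sum_add, IH]; reflexivity. Qed.

Hypothesis exit_rate_pos : forall y, 0 < exit_rate p d y.
Hypothesis rates_ge0 : forall y, Forall (fun tr => 0 <= snd tr) (trans p (d y) y).

Lemma step_sum_const y c : step_sum p d y (fun _ => c) = c.
Proof.
  rewrite step_sum_weighted.
  replace (fold_right _ 0 _) with (c * exit_rate p d y).
  - pose proof (exit_rate_pos y); field; lra.
  - unfold exit_rate; induction (trans p (d y) y) as [|tr l IH]; simpl; [|rewrite <- IH]; ring.
Qed.

Lemma step_sum_le y f g : (forall z, f z <= g z) -> step_sum p d y f <= step_sum p d y g.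
Proof.
  intros Hfg; rewrite !step_sum_weighted; apply Rmult_le_compat_r.
  { left; apply Rinv_0_lt_compat, exit_rate_pos. }
  induction (rates_ge0 y) as [|tr l Htr _ IH]; simpl; [lra|].
  apply Rplus_le_compat; [apply Rmult_le_compat_l|]; auto.
Qed.

Lemma step_sum_ge0 y f : (forall z, 0 <= f z) -> 0 <= step_sum p d y f.
Proof. intros Hf; rewrite <- (step_sum_const y 0); apply step_sum_le, Hf. Qed.

Lemma taboo_hit_ge0 n y : 0 <= taboo_hit p d n y.
Proof.
  revert y; induction n as [|n IH]; intros y; simpl; destruct (is_zero y); try lra.
  apply step_sum_ge0, IH.
Qed.

Definition hit_within N y := sum_f_R0 (fun n => taboo_hit p d n y) N.

Lemma hit_within_at_zero N y : is_zero y = true -> hit_within N y = 1.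
Proof.
  intros Hz; unfold hit_within; induction N as [|N IH]; simpl; rewrite Hz; [|rewrite IH]; lra.
Qed.

Lemma hit_within_step N y :
  is_zero y = false -> hit_within (S N) y = step_sum p d y (hit_within N).
Proof.
  intros Hz; unfold hit_within; rewrite decomp_sum by lia; cbn [Nat.pred taboo_hit].
  rewrite Hz, Rplus_0_l, step_sum_sum; reflexivity.
Qed.

Lemma hit_within_le1 N y : hit_within N y <= 1.
Proof.
  revert y; induction N as [|N IH]; intros y.
  - unfold hit_within; simpl; destruct (is_zero y); lra.
  - destruct (is_zero y) eqn:Hz; [rewrite hit_within_at_zero; auto; lra|].
    rewrite hit_within_step, <- (step_sum_const y 1) by exact Hz; apply step_sum_le, IH.
Qed.

Definition survive N y := 1 - hit_within N y.

Lemma survive_step N y : is_zero y = false -> survive (S N) y = step_sum p d y (survive N).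
Proof.
  intros Hz; unfold survive; rewrite hit_within_step, step_sum_sub, step_sum_const by exact Hz.
  reflexivity.
Qed.

Lemma survive_antitone k n y : (k <= n)%nat -> survive n y <= survive k y.
Proof.
  induction 1 as [|n _ IH]; [lra|].
  unfold survive, hit_within in *; rewrite tech5; pose proof (taboo_hit_ge0 (S n) y); lra.
Qed.

Definition drift_bound (w V : state -> R) :=
  forall y, is_zero y = false -> w y + step_sum p d y V <= V y.

Lemma drift_bound_mono w w' V :
  (forall y, w y <= w' y) -> drift_bound w' V -> drift_bound w V.
Proof. intros Hw HD y Hz; specialize (HD y Hz); specialize (Hw y); lra. Qed.

Section Lyapunov.

Variable V : state -> R.
Hypothesis V_ge0 : forall y, 0 <= V y.

Lemma sum_survive_le : drift_bound (fun _ => 1) V ->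
  forall N y, sum_f_R0 (fun k => survive k y) N <= V y.
Proof.
  intros HD N; induction N as [|N IH]; intros y; destruct (is_zero y) eqn:Hz.
  - unfold survive, hit_within; simpl; rewrite Hz; pose proof (V_ge0 y); lra.
  - unfold survive, hit_within; simpl; rewrite Hz.
    pose proof (HD y Hz); pose proof (step_sum_ge0 y V V_ge0); lra.
  - rewrite (sum_eq _ (fun _ => 0)), sum_cte, Rmult_0_l; auto.
    intros i _; unfold survive; rewrite hit_within_at_zero by exact Hz; ring.
  - rewrite decomp_sum by lia; cbn [Nat.pred].
    rewrite (sum_eq _ (fun i => step_sum p d y (survive i))) by (intros; apply survive_step, Hz).
    rewrite <- step_sum_sum.
    unfold survive at 1, hit_within; simpl; rewrite Hz.
    pose proof (HD y Hz); pose proof (step_sum_le y _ V IH); lra.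
Qed.

Lemma survive_le : drift_bound (fun _ => 1) V ->
  forall N y, survive N y <= V y / INR (S N).
Proof.
  intros HD N y.
  assert (Hsum : sum_f_R0 (fun _ => survive N y) N <= V y).
  { eapply Rle_trans; [|apply (sum_survive_le HD N y)].
    apply sum_Rle; intros n Hn; apply survive_antitone, Hn. }
  rewrite sum_cte in Hsum.
  pose proof (lt_0_INR (S N) (Nat.lt_0_succ N)).
  apply (Rmult_le_reg_r (INR (S N))); auto.
  unfold Rdiv; rewrite Rmult_assoc, Rinv_l; lra.
Qed.

End Lyapunov.

Lemma passage_prob_partial q n :
  sum_f_R0 (passage_prob p d q) n = 1 - step_sum p d q (survive n).
Proof.
  unfold survive; rewrite step_sum_sub, step_sum_const.
  unfold passage_prob, hit_within; rewrite step_sum_sum; ring.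
Qed.

Lemma passage_prob_sum_one V q : (forall y, 0 <= V y) -> drift_bound (fun _ => 1) V ->
  infinite_sum (passage_prob p d q) 1.
Proof.
  intros HV HD eps Heps.
  set (A := step_sum p d q V).
  assert (HA : 0 <= A) by apply (step_sum_ge0 q V HV).
  destruct (archimed_cor1 (eps / (A + 1))) as [N [HN HN0]].
  { apply Rdiv_lt_0_compat; lra. }
  exists N; intros n Hn.
  rewrite passage_prob_partial.
  assert (Hlo : 0 <= step_sum p d q (survive n)).
  { apply step_sum_ge0; intros z; pose proof (hit_within_le1 n z); unfold survive; lra. }
  assert (Hhi : step_sum p d q (survive n) <= A * / INR (S n)).
  { unfold A; rewrite Rmult_comm, <- step_sum_scal; apply step_sum_le; intros z.
    rewrite Rmult_comm; apply (survive_le V HV HD). }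
  assert (HSn : INR N <= INR (S n)) by (apply le_INR; lia).
  assert (Hinv : / INR (S n) <= / INR N) by (apply Rinv_le_contravar; [apply lt_0_INR|]; auto).
  assert (Hfin : (A + 1) * / INR N < eps).
  { replace eps with ((A + 1) * (eps / (A + 1))) by (field; lra).
    apply Rmult_lt_compat_l; lra. }
  assert (A * / INR (S n) <= (A + 1) * / INR N).
  { apply Rmult_le_compat; try lra; left; apply Rinv_0_lt_compat, lt_0_INR; lia. }
  unfold R_dist; rewrite Rabs_left1; lra.
Qed.

Section Weights.

Variable w : state -> R.
Hypothesis w_ge0 : forall y, 0 <= w y.

Lemma taboo_weight_ge0 n y : 0 <= taboo_weight p d w n y.
Proof.
  revert y; induction n as [|n IH]; intros y; simpl; [lra|]; destruct (is_zero y); [lra|].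
  apply step_sum_ge0; intros z.
  pose proof (taboo_hit_ge0 n z); pose proof (w_ge0 y); pose proof (IH z); nra.
Qed.

Definition weight_within N y := sum_f_R0 (fun n => taboo_weight p d w n y) N.

Lemma weight_within_at_zero N y : is_zero y = true -> weight_within N y = 0.
Proof.
  intros Hz; unfold weight_within; induction N as [|N IH]; simpl; [|rewrite IH, Hz]; lra.
Qed.

Lemma sum_step_weight N y :
  sum_f_R0 (fun n => step_sum p d y (fun z => w y * taboo_hit p d n z + taboo_weight p d w n z)) N
  = step_sum p d y (fun z => w y * hit_within N z + weight_within N z).
Proof.
  unfold hit_within, weight_within; rewrite <- step_sum_sum; apply step_sum_ext; intros z.
  rewrite sum_plus, scal_sum; apply Rplus_eq_compat_r, sum_eq; intros; apply Rmult_comm.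
Qed.

Lemma weight_within_step N y : is_zero y = false ->
  weight_within (S N) y =
  step_sum p d y (fun z => w y * hit_within N z + weight_within N z).
Proof.
  intros Hz; rewrite <- sum_step_weight; unfold weight_within.
  rewrite decomp_sum by lia; cbn [Nat.pred taboo_weight]; rewrite Hz, Rplus_0_l; reflexivity.
Qed.

Lemma weight_within_le V : (forall y, 0 <= V y) -> drift_bound w V ->
  forall N y, weight_within N y <= V y.
Proof.
  intros HV HD N; induction N as [|N IH]; intros y.
  - unfold weight_within; simpl; apply HV.
  - destruct (is_zero y) eqn:Hz; [rewrite weight_within_at_zero; auto|].
    rewrite weight_within_step by exact Hz.
    apply Rle_trans with (step_sum p d y (fun z => w y * 1 + V z)).
    + apply step_sum_le; intros z; apply Rplus_le_compat; [|apply IH].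
      apply Rmult_le_compat_l; [apply w_ge0 | apply hit_within_le1].
    + rewrite step_sum_add, step_sum_const, Rmult_1_r; apply (HD y Hz).
Qed.

Lemma passage_weight_summable V q : (forall y, 0 <= V y) -> drift_bound w V ->
  exists l, infinite_sum (passage_weight p d w q) l.
Proof.
  intros HV HD.
  destruct (growing_cv (sum_f_R0 (passage_weight p d w q))) as [l Hl].
  - intros n; rewrite tech5.
    assert (0 <= passage_weight p d w q (S n)); [|lra].
    apply step_sum_ge0; intros z; pose proof (w_ge0 q).
    pose proof (taboo_hit_ge0 (S n) z); pose proof (taboo_weight_ge0 (S n) z); nra.
  - exists (w q + step_sum p d q V); intros x [n ->].
    unfold passage_weight; rewrite sum_step_weight.
    replace (w q + step_sum p d q V) with (step_sum p d q (fun z => w q + V z))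
      by (rewrite step_sum_add, step_sum_const; reflexivity).
    apply step_sum_le; intros z; apply Rplus_le_compat; [|apply (weight_within_le V HV HD)].
    pose proof (w_ge0 q); pose proof (hit_within_le1 n z); nra.
  - exists l; exact Hl.
Qed.

End Weights.

Theorem zero_standard_of_drift V : (forall y, 0 <= V y) -> (forall y, 0 <= cost p y) ->
  drift_bound (fun y => 1 + (1 + cost p y) / exit_rate p d y) V -> zero_standard p d.
Proof.
  intros HV Hcost HD.
  assert (Htime : forall y, 0 <= / exit_rate p d y).
  { intros y; left; apply Rinv_0_lt_compat, exit_rate_pos. }
  assert (Hcostrate : forall y, 0 <= cost p y / exit_rate p d y).
  { intros y; apply Rmult_le_pos; auto. }
  assert (Hdom : forall w,
    (forall y, w y <= 1 + / exit_rate p d y + cost p y / exit_rate p d y) -> drift_bound w V).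
  { intros w Hw; apply drift_bound_mono with (2 := HD); intros y.
    specialize (Hw y); unfold Rdiv in *; lra. }
  assert (Hjump : drift_bound (fun _ => 1) V).
  { apply Hdom; intros y; pose proof (Htime y); pose proof (Hcostrate y); lra. }
  assert (Hmean : drift_bound (fun y => / exit_rate p d y) V).
  { apply Hdom; intros y; pose proof (Hcostrate y); lra. }
  assert (Hmeancost : drift_bound (fun y => cost p y / exit_rate p d y) V).
  { apply Hdom; intros y; pose proof (Htime y); lra. }
  intros q; repeat split.
  - exact (passage_prob_sum_one V q HV Hjump).
  - exact (passage_weight_summable _ Htime V q HV Hmean).
  - exact (passage_prob_sum_one V q HV Hjump).
  - exact (passage_weight_summable _ Hcostrate V q HV Hmeancost).
Qed.

End FirstPassage.

Section PriorityPolicy.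

Variable P : params.
Hypotheses (lam1_pos : 0 < lam1 P) (lam2_pos : 0 < lam2 P)
  (mu1_pos : 0 < mu1 P) (mu2_pos : 0 < mu2 P) (lamT_pos : 0 < lamT P)
  (h1_ge0 : 0 <= h1 P) (h2_ge0 : 0 <= h2 P) (cc_ge0 : 0 <= cc P)
  (stable : lam1 P + lam2 P < Rmin (mu1 P) (mu2 P)).

Lemma prio_exit_rate_pos y : 0 < exit_rate P prio y.
Proof.
  pose proof (pos_INR (fst y)).
  destruct y as [q1 [|q2]]; [destruct q1|];
  cbv beta iota zeta delta [exit_rate trans prio fold_right fst snd] in *; nra.
Qed.

Lemma prio_rates_ge0 y : Forall (fun tr => 0 <= snd tr) (trans P (prio y) y).
Proof.
  pose proof (pos_INR (fst y)).
  destruct y as [q1 [|q2]]; [destruct q1|]; cbv beta iota zeta delta [trans prio fst] in *;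
  repeat (apply Forall_cons; [cbn [snd]; nra|]); apply Forall_nil.
Qed.

Definition rate_total := mu1 P + mu2 P + lam1 P + lam2 P.
(* The midpoint of the admissible interval (lam1/(mu2 - lam2), 1) for b. *)
Definition weight2 := (1 + lam1 P / (mu2 P - lam2 P)) / 2.
Definition gap := (Rmin (mu1 P) (mu2 P) - lam1 P - lam2 P) / 2.
Definition lin_coef := (rate_total + 1) / gap + 1.
Definition scale := rate_total + 1 + (lamT P + h1 P + cc P * lamT P + h2 P / weight2) / gap.

Definition quad (L : R) := scale * (L ^ 2 + lin_coef * L).
Definition level (q : state) := INR (fst q) + weight2 * INR (snd q).
Definition lyap (q : state) := quad (level q).

Lemma weight2_bounds : 0 < weight2 < 1.
Proof.
  pose proof (Rmin_r (mu1 P) (mu2 P)).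
  assert (0 < lam1 P / (mu2 P - lam2 P) < 1); [|unfold weight2; lra].
  split; [apply Rdiv_lt_0_compat; lra|].
  apply Rmult_lt_reg_r with (mu2 P - lam2 P); [lra|].
  unfold Rdiv; rewrite Rmult_assoc, Rinv_l; lra.
Qed.

Lemma gap_pos : 0 < gap.
Proof. unfold gap; lra. Qed.

Lemma gap_le_serve1 : gap <= 1 * mu1 P - lam1 P - lam2 P * weight2.
Proof.
  pose proof (Rmin_l (mu1 P) (mu2 P)); pose proof weight2_bounds.
  assert (lam2 P * weight2 <= lam2 P) by nra; unfold gap; lra.
Qed.

Lemma gap_le_serve2 : gap <= weight2 * mu2 P - lam1 P - lam2 P * weight2.
Proof.
  pose proof (Rmin_r (mu1 P) (mu2 P)).
  assert (weight2 * (mu2 P - lam2 P) = (mu2 P - lam2 P + lam1 P) / 2).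
  { unfold weight2; field; lra. }
  unfold gap; lra.
Qed.

Lemma lin_coef_ge1 : 1 <= lin_coef.
Proof.
  pose proof gap_pos; unfold lin_coef, rate_total.
  assert (0 <= (mu1 P + mu2 P + lam1 P + lam2 P + 1) / gap); [|lra].
  apply Rmult_le_pos; [lra | left; apply Rinv_0_lt_compat; lra].
Qed.

Lemma lin_coef_gap : rate_total + 1 <= lin_coef * gap.
Proof. pose proof gap_pos; unfold lin_coef, rate_total; field_simplify; lra. Qed.

Lemma scale_ge : rate_total + 1 <= scale.
Proof.
  pose proof gap_pos; pose proof weight2_bounds.
  assert (0 <= h2 P / weight2) by (apply Rmult_le_pos; [lra | left; apply Rinv_0_lt_compat; lra]).
  assert (0 <= (lamT P + h1 P + cc P * lamT P + h2 P / weight2) / gap); [|unfold scale; lra].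
  apply Rmult_le_pos; [nra | left; apply Rinv_0_lt_compat; lra].
Qed.

Lemma cost_le_scale_level x z : 0 <= x -> 0 <= z ->
  (lamT P + h1 P + cc P * lamT P) * x + h2 P * z <= scale * gap * (x + weight2 * z).
Proof.
  intros Hx Hz; pose proof gap_pos; pose proof weight2_bounds; pose proof scale_ge.
  assert (Hsg : scale * gap = (rate_total + 1) * gap + (lamT P + h1 P + cc P * lamT P)
                              + h2 P / weight2).
  { unfold scale; field; lra. }
  assert (Hz2 : h2 P / weight2 * (weight2 * z) = h2 P * z) by (field; lra).
  assert (0 <= h2 P / weight2 * x)
    by (apply Rmult_le_pos; [apply Rmult_le_pos; [lra | left; apply Rinv_0_lt_compat; lra] | lra]).
  assert (0 <= (rate_total + 1) * gap * (x + weight2 * z))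
    by (unfold rate_total; apply Rmult_le_pos; nra).
  assert (0 <= (lamT P + h1 P + cc P * lamT P) * (weight2 * z)) by (apply Rmult_le_pos; nra).
  rewrite Hsg; lra.
Qed.

(* A service completion at rate mu lowers the level by dd (1 for queue 1, weight2
   for queue 2); the other moves are the two arrivals and the transfer. *)
Lemma service_drift (mu dd x z : R) :
  0 <= x -> 0 <= z -> 0 < mu -> 0 <= dd <= 1 -> mu + lam1 P + lam2 P <= rate_total ->
  gap <= dd * mu - lam1 P - lam2 P * weight2 ->
  let L := x + weight2 * z in
  let nu := mu + lam1 P + lam2 P + x * lamT P in
  nu + (1 + (h1 P * x + h2 P * z + cc P * lamT P * x))
  + (mu * quad (L - dd) + lam1 P * quad (L + 1) + lam2 P * quad (L + weight2)
     + x * lamT P * quad (L + weight2 - 1))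
  <= nu * quad L.
Proof.
  intros Hx Hz Hmu Hdd Hrate Hgap L nu.
  pose proof gap_pos; pose proof weight2_bounds; pose proof lin_coef_ge1; pose proof lin_coef_gap.
  pose proof scale_ge; pose proof (cost_le_scale_level x z Hx Hz).
  set (G := - dd * mu + lam1 P + lam2 P * weight2 + x * lamT P * (weight2 - 1)).
  set (S := mu * dd ^ 2 + lam1 P + lam2 P * weight2 ^ 2 + x * lamT P * (weight2 - 1) ^ 2).
  assert (Hexpand : mu * quad (L - dd) + lam1 P * quad (L + 1) + lam2 P * quad (L + weight2)
     + x * lamT P * quad (L + weight2 - 1) - nu * quad L = scale * ((2 * L + lin_coef) * G + S)).
  { unfold quad, G, S, nu; ring. }
  assert (HL : 0 <= L) by (unfold L; nra).
  assert (HxT : 0 <= x * lamT P * (1 - weight2)) by (apply Rmult_le_pos; nra).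
  assert (HG : (2 * L + lin_coef) * G
               <= (2 * L + lin_coef) * (- gap - x * lamT P * (1 - weight2))).
  { apply Rmult_le_compat_l; [lra | unfold G; lra]. }
  assert (HS : S <= rate_total + lin_coef * (x * lamT P * (1 - weight2))).
  { assert (mu * dd ^ 2 <= mu * 1) by (apply Rmult_le_compat_l; nra).
    assert (lam2 P * weight2 ^ 2 <= lam2 P * 1) by (apply Rmult_le_compat_l; nra).
    assert ((1 - weight2) * (x * lamT P * (1 - weight2)) <= lin_coef * (x * lamT P * (1 - weight2)))
      by (apply Rmult_le_compat_r; lra).
    unfold S; lra. }
  assert (Hquad : (2 * L + lin_coef) * G + S <= - gap * L - 1).
  { assert (0 <= L * (x * lamT P * (1 - weight2))) by (apply Rmult_le_pos; lra).
    assert (0 <= gap * L) by (apply Rmult_le_pos; lra).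
    lra. }
  assert (scale * ((2 * L + lin_coef) * G + S) <= scale * (- gap * L - 1))
    by (apply Rmult_le_compat_l; lra).
  unfold L, nu in *; unfold rate_total in *; lra.
Qed.

Lemma drift_div_rate (nu c s v : R) :
  0 < nu -> nu + (1 + c) + s <= nu * v -> 1 + (1 + c) / nu + s / nu <= v.
Proof.
  intros Hnu H; apply Rmult_le_reg_l with nu; [exact Hnu|].
  replace (nu * (1 + (1 + c) / nu + s / nu)) with (nu + (1 + c) + s) by (field; lra); exact H.
Qed.

Lemma prio_drift :
  drift_bound P prio (fun y => 1 + (1 + cost P y) / exit_rate P prio y) lyap.
Proof.
  pose proof weight2_bounds.
  intros [q1 q2] Hz; rewrite step_sum_weighted; apply drift_div_rate; [apply prio_exit_rate_pos|].
  destruct q2 as [|k]; [destruct q1 as [|j]; [discriminate|] | destruct q1 as [|i]].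
  1: pose proof (service_drift (mu1 P) 1 (INR (S j)) 0 (pos_INR _) (Rle_refl 0) mu1_pos
      ltac:(lra) ltac:(unfold rate_total; lra) gap_le_serve1) as D.
  2: pose proof (service_drift (mu2 P) weight2 0 (INR (S k)) (Rle_refl 0) (pos_INR _) mu2_pos
      ltac:(lra) ltac:(unfold rate_total; lra) gap_le_serve2) as D.
  3: pose proof (service_drift (mu2 P) weight2 (INR (S i)) (INR (S k)) (pos_INR _) (pos_INR _)
      mu2_pos ltac:(lra) ltac:(unfold rate_total; lra) gap_le_serve2) as D.
  all: cbv zeta in D; cbv beta iota zeta delta [exit_rate trans prio fold_right fst snd pred cost].
  all: unfold lyap, level, quad in *; cbn [fst snd] in *; rewrite ?S_INR, ?INR_0 in *; lra.
Qed.

Theorem prio_zero_standard : zero_standard P prio.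
Proof.
  apply (zero_standard_of_drift P prio prio_exit_rate_pos prio_rates_ge0 lyap).
  - intros y; unfold lyap, quad, level; pose proof weight2_bounds; pose proof lin_coef_ge1.
    pose proof scale_ge; pose proof (pos_INR (fst y)); pose proof (pos_INR (snd y)).
    assert (0 <= INR (fst y) + weight2 * INR (snd y)) by nra.
    apply Rmult_le_pos; [unfold rate_total in *; lra | nra].
  - intros [q1 q2]; unfold cost; cbn [fst snd]; pose proof (pos_INR q1); pose proof (pos_INR q2).
    pose proof (Rmult_le_pos _ _ h1_ge0 (pos_INR q1)); pose proof (Rmult_le_pos _ _ h2_ge0 (pos_INR q2)).
    assert (0 <= cc P * lamT P * INR q1) by (apply Rmult_le_pos; nra). lra.
  - exact prio_drift.
Qed.

End PriorityPolicy.

Theorem mainTheorem9 (l1 l2 m1 m2 lT hh1 hh2 c : R)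
  (Hl1 : 0 < l1) (Hl2 : 0 < l2) (Hm1 : 0 < m1) (Hm2 : 0 < m2) (HlT : 0 < lT)
  (Hh1 : 0 <= hh1) (Hh2 : 0 <= hh2) (Hc : 0 <= c)
  (Hstab : l1 + l2 < Rmin m1 m2) :
  zero_standard (Params l1 l2 m1 m2 lT hh1 hh2 c) prio.
Proof. apply prio_zero_standard; assumption. Qed.
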